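(* Under the same setting as the context (line-of-sight-only channel $\mathbf{h}_k=\alpha_k\mathbf{a}(\theta_k)$ with $\alpha_k\neq 0$), let $\hat\alpha\in\mathbb{C}\setminus\{0\}$ be arbitrary. Then $\phi\mapsto\gamma(\hat\alpha\,\mathbf{a}(\phi),\mathbf{F}_k,\mathbf{y}_k)$ attains its maximum over $[-\pi,\pi)$, and every maximizer $$\bar\phi^\star\in\arg\max_{\phi\in[-\pi,\pi)}\gamma(\hat\alpha\,\mathbf{a}(\phi),\mathbf{F}_k,\mathbf{y}_k)$$ satisfies $\mathbf{a}(\bar\phi^\star)=\mathbf{a}(\theta_k)$.
   Context: Let $N\ge 2$, $p_{\rm t}>0$, $\sigma^2>0$, and fix $k\in\{1,\dots,N\}$. The array response vector is $\mathbf{a}(\theta)=(1,e^{j\pi\sin\theta},\dots,e^{j\pi(N-1)\sin\theta})^{\mathsf T}\in\mathbb{C}^N$. $\mathbf{U}_N$ is the normalized DFT matrix, $\mathbf{U}_N(a,b)=\frac{1}{\sqrt N}e^{-j2\pi(a-1)(b-1)/N}$; $\mathbf{C}_N(i,k)=((i-k)\bmod N)+1$; and for $k'\in\{1,\dots,N\}$, $\mathbf{F}_{k'}$ is the matrix whose $n$-th column $\mathbf{p}_{[n,k']}$ is the $\mathbf{C}_N(n,k')$-th column of $\mathbf{U}_N$. For $n\in\{1,\dots,N\}$, $\mathbf{P}_n$ is the matrix whose $k'$-th column is $\mathbf{p}_{[n,k']}$. A symbol vector $\mathbf{s}\in\mathbb{C}^N$ with $\mathbb{E}[\mathbf{s}\mathbf{s}^{\mathsf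 H}]=\mathbf{I}_N$ is sent with $\mathbf{x}_n=\frac{1}{\sqrt N}\mathbf{P}_n\mathbf{s}$; device $k$ receives $\mathbf{y}_k=(y_{[1,k]},\dots,y_{[N,k]})^{\mathsf T}$ with $y_{[n,k]}=\sqrt{p_{\rm t}}\mathbf{h}_k^{\mathsf H}\mathbf{x}_n+z_{[n,k]}$, so that $\mathbf{y}_k=\sqrt{p_{\rm t}/N}\sum_{k'=1}^N\mathbf{s}(k')\mathbf{F}_{k'}^{\mathsf T}\mathbf{h}_k^{*}+\mathbf{z}_k$, where $\mathbf{z}_k$ is independent of $\mathbf{s}$, zero mean, with $\mathbb{E}[\mathbf{z}_k\mathbf{z}_k^{\mathsf H}]=\sigma^2\mathbf{I}_N$. For a candidate channel $\mathbf{h}\in\mathbb{C}^N$ with all entries nonzero, let $\tilde{\mathbf{h}}=\mathbf{1}_N\oslash(\mathbf{h}^* )$ (entrywise division), $g(\mathbf{h})=\tilde{\mathbf{h}}^{\mathsf T}\mathbf{F}_k^*\mathbf{F}_k^{\mathsf T}\mathbf{h}_k^*$, $v_{k'}(\mathbf{h})=\tilde{\mathbf{h}}^{\mathsf T}\mathbf{F}_k^*\mathbf{F}_{k'}^{\mathsf T}\mathbf{h}_k^*$, so that the combined signal $\tilde{\mathbf{h}}^{\mathsf T}\mathbf{F}_k^*\mathbf{y}_k=P+I$ with $P=\sqrt{p_{\rm t}/N}\,\mathbf{s}(k)g(\mathbf{h})$ and $I=\sqrt{p_{\rm t}/N}\sum_{k'\neq k}\mathbf{s}(k')v_{k'}(\mathbf{h})+\tilde{\mathbf{h}}^{\mathsf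 T}\mathbf{F}_k^*\mathbf{z}_k$. The SINR is $\gamma(\mathbf{h},\mathbf{F}_k,\mathbf{y}_k)=\mathbb{E}[|P|^2]/\mathbb{E}[|I|^2]$, expectations over $\mathbf{s}$ and $\mathbf{z}_k$. *)

From mathcomp Require Import all_boot all_order all_algebra.
From mathcomp Require Import all_classical all_reals all_analysis.
From mathcomp Require Import complex.
Set Implicit Arguments. Unset Strict Implicit. Unset Printing Implicit Defensive.
Import Order.TTheory GRing.Theory Num.Theory.
Local Open Scope ring_scope.

Section Defs.
Variable R : realType.
Local Notation C := R[i].

Definition expj (x : R) : C := Complex (cos x) (sin x).
Definition cconj (z : C) : C := Complex (complex.Re z) (- complex.Im z).
Definition sqmod (z : C) : R := complex.Re z ^+ 2 + complex.Im z ^+ 2.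
Definition conj_mx m n (A : 'M[C]_(m, n)) : 'M[C]_(m, n) := map_mx cconj A.

(* array response vector a(theta), 0-indexed: entry n is e^{j pi n sin theta} *)
Definition steer (N : nat) (th : R) : 'cV[C]_N :=
  \col_(n < N) expj (pi * n%:R * sin th).

(* normalized DFT matrix U_N (0-indexed): U(a,b) = 1/sqrt N e^{-j 2 pi a b / N} *)
Definition dftU (N : nat) : 'M[C]_N :=
  \matrix_(a < N, b < N)
    (Complex (Num.sqrt (N%:R))^-1 0 * expj (- (2 * pi * (a * b)%:R / N%:R))).

Lemma cidx_proof (N : nat) (i k : 'I_N) : ((i + N - k) %% N < N)%N.
Proof. by apply: ltn_pmod; apply: leq_ltn_trans (ltn_ord i). Qed.

(* C_N(i,k) - 1 = (i - k) mod N, 0-indexed *)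
Definition cidx (N : nat) (i k : 'I_N) : 'I_N := Ordinal (cidx_proof i k).

(* F_{k'}: its n-th column p_[n,k'] is the C_N(n,k')-th column of U_N *)
Definition Fmat (N : nat) (k' : 'I_N) : 'M[C]_N :=
  \matrix_(a < N, n < N) dftU N a (cidx n k').

Definition htilde (N : nat) (h : 'cV[C]_N) : 'cV[C]_N :=
  \col_(i < N) (cconj (h i 0))^-1.

Definition gval (N : nat) (k : 'I_N) (h hk : 'cV[C]_N) : C :=
  ((htilde h)^T *m conj_mx (Fmat k) *m (Fmat k)^T *m conj_mx hk) 0 0.
Definition vval (N : nat) (k k' : 'I_N) (h hk : 'cV[C]_N) : C :=
  ((htilde h)^T *m conj_mx (Fmat k) *m (Fmat k')^T *m conj_mx hk) 0 0.
Definition noise_comb (N : nat) (k : 'I_N) (h : 'cV[C]_N) : 'rV[C]_N :=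
  (htilde h)^T *m conj_mx (Fmat k).

(* SINR gamma(h, F_k, y_k) = E|P|^2 / E|I|^2, with the expectations evaluated
   from the second-order statistics E[s s^H] = I_N, E[z z^H] = sigma^2 I_N,
   z zero-mean and independent of s:
   E|P|^2 = p_t/N |g|^2,
   E|I|^2 = p_t/N sum_{k'<>k} |v_k'|^2 + sigma^2 || h~^T F_k^* ||^2. *)
Definition sinr (N : nat) (pt sigma2 : R) (k : 'I_N) (h hk : 'cV[C]_N) : R :=
  (pt / N%:R * sqmod (gval k h hk)) /
  (pt / N%:R * (\sum_(k' < N | k' != k) sqmod (vval k k' h hk))
   + sigma2 * \sum_(i < N) sqmod (noise_comb k h 0 i)).

End Defs.

From mathcomp Require Import all_boot all_order all_algebra.
From mathcomp Require Import all_classical all_reals all_analysis.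
From mathcomp Require Import complex.
From mathcomp Require Import ring lra.
Set Implicit Arguments. Unset Strict Implicit. Unset Printing Implicit Defensive.
Import Order.TTheory GRing.Theory Num.Theory.
Local Open Scope ring_scope.

(* The matrices F_k^* F_k'^T are diagonal, and their diagonal entries, indexed
   by (a, k'), form a DFT matrix.  Hence v_k'(h) is the DFT of the sequence
   y_a = h~_a conj(h_k,a), and Parseval gives
   |g|^2 + sum_{k' <> k} |v_k'|^2 = N sum_a |y_a|^2, while the noise term is
   sigma^2 ||h~||^2.  For h = alpha_hat a(phi) both right-hand sides are
   independent of phi, so the SINR is an increasing function of
   |g|^2 = |beta|^2 |sum_a x^a|^2, where x = e^{j pi (sin phi - sin theta_k)}.
   By the triangle inequality this is at most N^2 |beta|^2, with equality iff
   x = 1, i.e. iff a(phi) = a(theta_k); phi = asin (sin theta_k) attains it. *)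

Lemma sum_prim_root_ratio (F : fieldType) (n : nat) (z : F) (a b : 'I_n) :
  n.-primitive_root z -> \sum_(i < n) (z ^+ a / z ^+ b) ^+ i = (a == b)%:R * n%:R.
Proof.
move=> prim_z; have z_neq0 : z != 0.
  by rewrite (prim_root_eq0 prim_z) -lt0n (prim_order_gt0 prim_z).
have [<-|neq_ab] := eqVneq a b.
  under eq_bigr do rewrite divff ?expf_neq0 // expr1n.
  by rewrite sumr_const card_ord mul1r.
set r := z ^+ a / z ^+ b.
have r_n : r ^+ n = 1.
  rewrite exprMn exprVn -!exprM (mulnC a) (mulnC b) !exprM (prim_expr_order prim_z).
  by rewrite !expr1n invr1 mulr1.
have r_neq1 : r != 1.
  apply: contra neq_ab => /eqP/divr1_eq/eqP.
  by rewrite (eq_prim_root_expr prim_z) !modn_small.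
have := subrX1 r n; rewrite r_n subrr => /esym/eqP.
by rewrite mulf_eq0 subr_eq0 (negbTE r_neq1) mul0r => /eqP.
Qed.

Lemma norm_sum_expr_eq1 (C : numClosedFieldType) (n : nat) (x : C) :
  (1 < n)%N -> `|x| = 1 -> `|\sum_(i < n) x ^+ i| = n%:R -> x = 1.
Proof.
move=> n_gt1 x1 sum_n.
have normX (i : 'I_n) : `|x ^+ i| = 1 by rewrite normrX x1 expr1n.
have [|t _ xt] := @normC_sum_eq1 _ _ xpredT (fun i : 'I_n => x ^+ i) _ (fun i _ => normX i).
  by rewrite sum_n (eq_bigr _ (fun i _ => normX i)) sumr_const card_ord.
by rewrite -[x]expr1 (xt (Ordinal n_gt1)) // -(xt (Ordinal (ltnW n_gt1))) // expr0.
Qed.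

Definition sinr_ratio (R : numFieldType) (P Q T G : R) : R := P * G / (P * (T - G) + Q).

Lemma ler_sinr_ratio (R : realFieldType) (P Q T G1 G2 : R) :
  0 < P -> 0 < Q -> 0 <= T -> G1 <= T -> G2 <= T ->
  (sinr_ratio P Q T G1 <= sinr_ratio P Q T G2) = (G1 <= G2).
Proof.
move=> P_gt0 Q_gt0 T_ge0 G1T G2T.
have den_gt0 G : G <= T -> 0 < P * (T - G) + Q.
  by move=> GT; rewrite ltr_wpDl // mulr_ge0 ?subr_ge0 // ltW.
rewrite /sinr_ratio ler_pdivrMr ?den_gt0 // mulrAC ler_pdivlMr ?den_gt0 //.
have -> : P * G1 * (P * (T - G2) + Q) = G1 * (P * (P * T + Q)) - P * P * G1 * G2 by ring.
have -> : P * G2 * (P * (T - G1) + Q) = G2 * (P * (P * T + Q)) - P * P * G1 * G2 by ring.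
by rewrite lerD2r ler_pM2r // mulr_gt0 // ltr_wpDl // mulr_ge0 // ltW.
Qed.

Section ComplexExponential.
Variable R : realType.
Local Notation C := R[i].
Implicit Types (x y : R) (z : C).

Lemma cconjE z : cconj z = z^*.
Proof. by case: z. Qed.

Lemma conj_mxE m n (A : 'M[C]_(m, n)) i j : conj_mx A i j = (A i j)^*.
Proof. by rewrite mxE cconjE. Qed.

Lemma sqmodE z : (sqmod z)%:C%C = `|z| ^+ 2.
Proof. exact: add_Re2_Im2. Qed.

Lemma sqmod_gt0 z : z != 0 -> 0 < sqmod z.
Proof. by move=> z_neq0; rewrite -ltcR sqmodE exprn_gt0 ?normr_gt0. Qed.

Lemma sqmodM z1 z2 : sqmod (z1 * z2) = sqmod z1 * sqmod z2.
Proof. by apply: complexI; rewrite rmorphM /= !sqmodE normrM exprMn. Qed.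

Lemma sqmod_le_sqr z x : 0 <= x -> (sqmod z <= x ^+ 2) = (`|z| <= x%:C%C).
Proof.
move=> x_ge0; rewrite -lecR sqmodE rmorphXn /=.
by rewrite ler_sqr ?nnegrE ?normr_ge0 ?ler0c.
Qed.

Lemma expjD x y : expj (x + y) = expj x * expj y.
Proof.
rewrite /expj cosD sinD; simpc.
by apply/eqP; rewrite eq_complex /=; apply/andP; split; apply/eqP; ring.
Qed.

Lemma expj0 : expj 0 = 1 :> C.
Proof. by rewrite /expj cos0 sin0. Qed.

Lemma conj_expj x : (expj x)^* = expj (- x).
Proof. by rewrite /expj cosN sinN. Qed.

Lemma inv_expj x : (expj x)^-1 = expj (- x).
Proof. by apply: mulr1_eq; rewrite -expjD subrr expj0. Qed.

Lemma expjMn n x : expj (n%:R * x) = expj x ^+ n.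
Proof.
elim: n => [|n IHn]; first by rewrite mul0r expj0.
by rewrite -addn1 natrD mulrDl mul1r expjD IHn exprD expr1.
Qed.

Lemma sqmod_expj x : sqmod (expj x) = 1.
Proof. exact: cos2Dsin2. Qed.

Lemma norm_expj x : `|expj x| = 1.
Proof.
apply/eqP; rewrite -(sqrp_eq1 (normr_ge0 _)) -sqmodE sqmod_expj.
by rewrite rmorph1.
Qed.

Lemma expj_neq0 x : expj x != 0.
Proof. by rewrite -normr_eq0 norm_expj oner_eq0. Qed.

Lemma expj_neq1 x : 0 < x < pi *+ 2 -> expj x != 1.
Proof.
move=> /andP[x_gt0 x_lt2pi]; apply: contraTneq isT => -[cos_x1 _].
have sin_half_gt0 : 0 < sin (x / 2).
  by rewrite sin_gt0_pi // divr_gt0 //= ltr_pdivrMr // mulr_natr.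
have : sin (x / 2) ^+ 2 = 0.
  have x_half : (x / 2) *+ 2 = x by rewrite -mulr_natr divfK ?pnatr_eq0.
  have := cos_mulr2n (x / 2); rewrite x_half cos_x1.
  by rewrite sin2cos2 -mulr_natr; lra.
by move/eqP; rewrite sqrf_eq0 gt_eqF.
Qed.

End ComplexExponential.

Section DFT.
Variables (R : realType) (N : nat).
Local Notation C := R[i].

Definition dft_root : C := expj (2 * pi / N%:R).

Lemma dft_root_prim : (0 < N)%N -> N.-primitive_root dft_root.
Proof.
move=> N_gt0; apply/andP; split => //; apply/forallP => i.
have turn : N%:R * (2 * pi / N%:R) = pi *+ 2 :> R.
  by rewrite mulrC divfK ?pnatr_eq0 -?lt0n // mulr_natl.
rewrite unity_rootE /dft_root -expjMn.
have [->|neq_iN] := eqVneq i.+1 N.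
  by rewrite turn /expj cos2pi sin2pi !eqxx.
rewrite (negbTE (expj_neq1 _)) //.
have lt_iN : (i.+1 < N)%N by rewrite ltn_neqAle neq_iN ltn_ord.
have step_gt0 : 0 < 2 * pi / N%:R :> R.
  by rewrite divr_gt0 ?ltr0n // mulr_gt0 // pi_gt0.
by rewrite -turn ltr_pM2r // ltr_nat lt_iN mulr_gt0 ?ltr0n.
Qed.

Lemma conj_dft_root : dft_root^* = dft_root^-1.
Proof. by rewrite conj_expj inv_expj. Qed.

Lemma dft_root_neq0 : dft_root != 0.
Proof. exact: expj_neq0. Qed.

Lemma FmatE (k a n : 'I_N) :
  Fmat R k a n = (Num.sqrt N%:R)^-1%:C%C * ((dft_root ^+ a) ^+ k / (dft_root ^+ a) ^+ n).
Proof.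
have N_gt0 : (0 < N)%N by apply: leq_ltn_trans (ltn_ord a).
set u := dft_root ^+ a.
have u_N : u ^+ N = 1 by rewrite exprAC (prim_expr_order (dft_root_prim N_gt0)) expr1n.
have u_Nk : (u ^+ k)^-1 = u ^+ (N - k).
  by apply: mulr1_eq; rewrite -exprD subnKC ?u_N // ltnW.
rewrite !mxE; congr (_ * _).
rewrite (_ : 2 * pi * _ / _ = (a * cidx n k)%:R * (2 * pi / N%:R)); last by ring.
rewrite -inv_expj expjMn exprM -/u /= expr_mod // -addnBA ?(ltnW (ltn_ord k)) //.
by rewrite exprD -u_Nk invfM invrK mulrC.
Qed.

Definition dft_phase (k a k' : 'I_N) : C := (dft_root ^+ a) ^+ k' / (dft_root ^+ a) ^+ k.

Lemma conjF_mulmx_trF (k k' a b : 'I_N) :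
  (conj_mx (Fmat R k) *m (Fmat R k')^T) a b = (a == b)%:R * dft_phase k a k'.
Proof.
have N_gt0 : (0 < N)%N by apply: leq_ltn_trans (ltn_ord a).
have N_neq0 : N%:R != 0 :> C by rewrite pnatr_eq0 -lt0n.
have w_neq0 := dft_root_neq0.
have scale : ((Num.sqrt N%:R)^-1%:C%C)^* * (Num.sqrt N%:R)^-1%:C%C = N%:R^-1 :> C.
  rewrite (_ : _^* = (Num.sqrt N%:R)^-1%:C%C); last by rewrite -cconjE /cconj /= oppr0.
  by rewrite -rmorphM /= -invfM -expr2 sqr_sqrtr ?ler0n // fmorphV rmorph_nat.
set u := dft_root ^+ a; set v := dft_root ^+ b.
have u_neq0 : u != 0 by rewrite expf_neq0.
have v_neq0 : v != 0 by rewrite expf_neq0.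
transitivity (N%:R^-1 * (v ^+ k' / u ^+ k) * \sum_(n < N) (u / v) ^+ n).
  rewrite mxE big_distrr; apply: eq_bigr => n _.
  rewrite conj_mxE [(Fmat R k')^T _ _]mxE !FmatE.
  set s := (Num.sqrt N%:R)^-1%:C%C.
  rewrite !rmorphM !fmorphV !rmorphXn /= conj_dft_root -/u -/v !exprVn -/u.
  by rewrite mulrACA scale exprMn exprVn; field; rewrite !expf_neq0 ?u_neq0 ?v_neq0 ?N_neq0.
rewrite /u /v (sum_prim_root_ratio a b (dft_root_prim N_gt0)) -/u -/v.
have [eq_ab|] := eqVneq a b; last by rewrite !mul0r mulr0.
by rewrite /v -eq_ab -/u /dft_phase; field; rewrite expf_neq0 // N_neq0.
Qed.

Lemma dft_phase_id (k a : 'I_N) : dft_phase k a k = 1.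
Proof. by rewrite /dft_phase divff // !expf_neq0 // dft_root_neq0. Qed.

Lemma dft_phase_orth (k a b : 'I_N) :
  \sum_(k' < N) dft_phase k a k' * (dft_phase k b k')^* = (a == b)%:R * N%:R.
Proof.
have N_gt0 : (0 < N)%N by apply: leq_ltn_trans (ltn_ord a).
have w_neq0 := dft_root_neq0.
set u := dft_root ^+ a; set v := dft_root ^+ b.
have u_neq0 : u != 0 by rewrite expf_neq0.
have v_neq0 : v != 0 by rewrite expf_neq0.
transitivity (v ^+ k / u ^+ k * \sum_(k' < N) (u / v) ^+ k').
  rewrite big_distrr; apply: eq_bigr => k' _.
  rewrite /dft_phase !rmorphM fmorphV !rmorphXn /= conj_dft_root -/u -/v !exprVn -/v.
  by rewrite exprMn exprVn; field; rewrite !expf_neq0.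
rewrite /u /v (sum_prim_root_ratio a b (dft_root_prim N_gt0)) -/u -/v.
have [eq_ab|] := eqVneq a b; last by rewrite !mul0r mulr0.
by rewrite /v -eq_ab -/u divff ?mul1r // expf_neq0.
Qed.

End DFT.

Section Sinr.
Variable R : realType.
Local Notation C := R[i].

Lemma sum_sqmod_isometry (n m : nat) (M : 'I_n -> 'I_m -> C) (c : R) (u : 'I_n -> C) :
  (forall a b, \sum_(j < m) M a j * (M b j)^* = (a == b)%:R * c%:C%C) ->
  \sum_(j < m) sqmod (\sum_(a < n) u a * M a j) = c * \sum_(a < n) sqmod (u a).
Proof.
move=> M_orth; apply: complexI; rewrite rmorphM !rmorph_sum big_distrr /=.
transitivity (\sum_(j < m) \sum_(a < n) \sum_(b < n) u a * (u b)^* * (M a j * (M b j)^*)).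
  apply: eq_bigr => j _; rewrite sqmodE normCK rmorph_sum big_distrl /=.
  apply: eq_bigr => a _; rewrite big_distrr /=; apply: eq_bigr => b _.
  by rewrite rmorphM mulrACA.
rewrite exchange_big /=; apply: eq_bigr => a _; rewrite exchange_big /=.
under eq_bigr => b _ do rewrite -big_distrr /= M_orth.
rewrite (bigD1 a) //= big1 => [|b neq_ba].
  by rewrite eqxx mul1r addr0 sqmodE normCK mulrC.
by rewrite eq_sym (negbTE neq_ba) mul0r mulr0.
Qed.

Variables (N : nat) (k : 'I_N).

Lemma quad_form_Fmat (k' : 'I_N) (u v : 'cV[C]_N) :
  (u^T *m conj_mx (Fmat R k) *m (Fmat R k')^T *m conj_mx v) 0 0 =
  \sum_(a < N) u a 0 * (v a 0)^* * dft_phase R k a k'.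
Proof.
rewrite -(mulmxA u^T) mxE; apply: eq_bigr => a _.
rewrite conj_mxE mxE (bigD1 a) //= big1 => [|b neq_ba]; last first.
  by rewrite mxE conjF_mulmx_trF (negbTE neq_ba) mul0r mulr0.
by rewrite mxE conjF_mulmx_trF eqxx mul1r addr0 mulrAC.
Qed.

Lemma vvalE (k' : 'I_N) (h hk : 'cV[C]_N) :
  vval k k' h hk = \sum_(a < N) htilde h a 0 * (hk a 0)^* * dft_phase R k a k'.
Proof. exact: quad_form_Fmat. Qed.

Lemma gvalE (h hk : 'cV[C]_N) :
  gval k h hk = \sum_(a < N) htilde h a 0 * (hk a 0)^*.
Proof.
by rewrite [gval _ _ _]vvalE; apply: eq_bigr => a _; rewrite dft_phase_id mulr1.
Qed.

Lemma sum_sqmod_vval (h hk : 'cV[C]_N) :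
  \sum_(k' < N) sqmod (vval k k' h hk) =
  N%:R * \sum_(a < N) sqmod (htilde h a 0 * (hk a 0)^*).
Proof.
under eq_bigr do rewrite vvalE.
by apply: sum_sqmod_isometry => a b; rewrite dft_phase_orth rmorph_nat.
Qed.

Lemma sum_sqmod_noise_comb (h : 'cV[C]_N) :
  \sum_(i < N) sqmod (noise_comb k h 0 i) = \sum_(a < N) sqmod (htilde h a 0).
Proof.
have noise_combE i : noise_comb k h 0 i = \sum_(a < N) htilde h a 0 * (Fmat R k a i)^*.
  by rewrite mxE; apply: eq_bigr => a _; rewrite conj_mxE mxE.
under eq_bigr do rewrite noise_combE.
rewrite -[RHS]mul1r; apply: sum_sqmod_isometry => a b.
under eq_bigr do rewrite conjCK.
have := conjF_mulmx_trF R k k a b; rewrite mxE dft_phase_id rmorph1 => <-.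
by apply: eq_bigr => i _; rewrite conj_mxE [_^T _ _]mxE.
Qed.

Lemma sinrE (pt sigma2 : R) (h hk : 'cV[C]_N) :
  sinr pt sigma2 k h hk =
  sinr_ratio (pt / N%:R) (sigma2 * \sum_(a < N) sqmod (htilde h a 0))
    (\sum_(k' < N) sqmod (vval k k' h hk)) (sqmod (gval k h hk)).
Proof.
rewrite /sinr /sinr_ratio sum_sqmod_noise_comb [in RHS](bigD1 k) //= -/(gval k h hk).
by rewrite [sqmod (gval _ _ _) + _]addrC addrK.
Qed.

End Sinr.

Section LineOfSight.
Variable R : realType.
Local Notation C := R[i].

Lemma sqmod_sum_expj_le (n : nat) (t : R) :
  sqmod (\sum_(a < n) expj t ^+ a) <= n%:R ^+ 2.
Proof.
rewrite sqmod_le_sqr ?ler0n // rmorph_nat.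
apply: le_trans (ler_norm_sum _ _ _) _.
rewrite (eq_bigr (fun=> 1)) => [|a _]; last by rewrite normrX norm_expj expr1n.
by rewrite sumr_const card_ord.
Qed.

Lemma sqmod_sum_expj0 (n : nat) : sqmod (\sum_(a < n) expj 0 ^+ a) = n%:R ^+ 2 :> R.
Proof.
rewrite expj0; under eq_bigr do rewrite expr1n.
by apply: complexI; rewrite sqmodE sumr_const card_ord normr_nat rmorphXn rmorph_nat.
Qed.

Lemma expj_eq1_of_sqmod_sum (n : nat) (t : R) : (1 < n)%N ->
  n%:R ^+ 2 <= sqmod (\sum_(a < n) expj t ^+ a) -> expj t = 1.
Proof.
move=> n_gt1 le_n2.
have eq_n2 : sqmod (\sum_(a < n) expj t ^+ a) = n%:R ^+ 2.
  by apply/le_anti; rewrite le_n2 sqmod_sum_expj_le.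
apply: (norm_sum_expr_eq1 n_gt1 (norm_expj t)); apply/eqP.
by rewrite -(eqrXn2 (ltn0Sn 1)) ?normr_ge0 ?ler0n // -sqmodE eq_n2 rmorphXn rmorph_nat.
Qed.

Variable N : nat.

Lemma eq_steer (phi th : R) :
  expj (pi * (sin phi - sin th)) = 1 -> steer N phi = steer N th.
Proof.
move=> x_eq1; apply/matrixP => a j; rewrite !mxE.
have -> : pi * a%:R * sin phi = pi * a%:R * sin th + a%:R * (pi * (sin phi - sin th)).
  by ring.
by rewrite expjD expjMn x_eq1 expr1n mulr1.
Qed.

Lemma htilde_steer (al : C) (phi : R) (a : 'I_N) :
  htilde (al *: steer N phi) a 0 = (al^*)^-1 * expj (pi * a%:R * sin phi).
Proof. by rewrite !mxE cconjE rmorphM /= invfM conj_expj -inv_expj invrK. Qed.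

Lemma htilde_steer_mul (al ak : C) (phi th : R) (a : 'I_N) :
  htilde (al *: steer N phi) a 0 * ((ak *: steer N th) a 0)^* =
  ak^* / al^* * expj (pi * (sin phi - sin th)) ^+ a.
Proof.
rewrite htilde_steer !mxE rmorphM /= conj_expj -expjMn.
have -> : a%:R * (pi * (sin phi - sin th)) = pi * a%:R * sin phi + - (pi * a%:R * sin th).
  by ring.
by rewrite expjD mulrACA [al^*^-1 * _]mulrC.
Qed.

Lemma sinr_steer (k : 'I_N) (pt sigma2 : R) (al ak : C) (phi th : R) :
  sinr pt sigma2 k (al *: steer N phi) (ak *: steer N th) =
  sinr_ratio (pt / N%:R) (sigma2 * (N%:R * sqmod (al^*)^-1))
    (sqmod (ak^* / al^*) * N%:R ^+ 2)
    (sqmod (ak^* / al^*) * sqmod (\sum_(a < N) expj (pi * (sin phi - sin th)) ^+ a)).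
Proof.
have sqmod_prod a : sqmod (htilde (al *: steer N phi) a 0 * ((ak *: steer N th) a 0)^*) =
    sqmod (ak^* / al^*).
  by rewrite htilde_steer_mul sqmodM -expjMn sqmod_expj mulr1.
have sqmod_htilde a : sqmod (htilde (al *: steer N phi) a 0) = sqmod (al^*)^-1.
  by rewrite htilde_steer sqmodM sqmod_expj mulr1.
rewrite sinrE sum_sqmod_vval gvalE (eq_bigr _ (fun a _ => sqmod_prod a)).
rewrite (eq_bigr _ (fun a _ => sqmod_htilde a)).
rewrite (eq_bigr _ (fun a _ => htilde_steer_mul al ak phi th a)) -big_distrr /= sqmodM.
rewrite !sumr_const !card_ord; congr sinr_ratio; first by rewrite mulr_natl.
by rewrite mulr_natl -mulrnA -natrX mulr_natr.
Qed.

End LineOfSight.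

Lemma asin_in_pi (R : realType) (y : R) : -1 <= y <= 1 -> -pi <= asin y < pi.
Proof.
move=> y_in; have := asin_geNpi2 y_in; have := asin_lepi2 y_in; have := @pi_gt0 R.
by move=> pi_gt0 le_pi2 ge_pi2; apply/andP; split; lra.
Qed.

Theorem corollary1 (R : realType) (N : nat) (pt sigma2 : R) (k : 'I_N)
    (alpha_k : R[i]) (theta_k : R) (alpha_hat : R[i]) :
  (2 <= N)%N -> 0 < pt -> 0 < sigma2 -> alpha_k != 0 -> alpha_hat != 0 ->
  let hk := alpha_k *: steer N theta_k in
  let f := fun phi : R => sinr pt sigma2 k (alpha_hat *: steer N phi) hk in
  (exists phi : R, -pi <= phi < pi /\
     forall psi : R, -pi <= psi < pi -> f psi <= f phi) /\
  (forall phi : R, -pi <= phi < pi ->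
     (forall psi : R, -pi <= psi < pi -> f psi <= f phi) ->
     steer N phi = steer N theta_k).
Proof.
move=> N_ge2 pt_gt0 sigma2_gt0 alpha_k_neq0 alpha_hat_neq0 hk f.
set c := sqmod (alpha_k^* / alpha_hat^*).
set G := fun phi => sqmod (\sum_(a < N) expj (pi * (sin phi - sin theta_k)) ^+ a).
set T := c * N%:R ^+ 2.
set ratio := sinr_ratio (pt / N%:R) (sigma2 * (N%:R * sqmod (alpha_hat^*)^-1)) T.
have fE phi : f phi = ratio (c * G phi) by rewrite /f /hk sinr_steer.
have c_gt0 : 0 < c by rewrite sqmod_gt0 // mulf_neq0 ?invr_eq0 ?conjC_eq0.
have cG_le phi : c * G phi <= T by rewrite ler_pM2l // sqmod_sum_expj_le.
have ler_ratio G1 G2 : G1 <= T -> G2 <= T -> (ratio G1 <= ratio G2) = (G1 <= G2).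
  have N_gt0 : (0 < N)%N by apply: leq_trans N_ge2.
  apply: ler_sinr_ratio; last exact: mulr_ge0 (ltW c_gt0) (sqr_ge0 _).
    by rewrite divr_gt0 ?ltr0n.
  by rewrite !mulr_gt0 ?ltr0n // sqmod_gt0 // invr_eq0 conjC_eq0.
pose phi0 := asin (sin theta_k).
have sin_in : -1 <= sin theta_k <= 1 by rewrite sin_geN1 sin_le1.
have sin_phi0 : sin phi0 = sin theta_k by rewrite asinK // in_itv.
have G_phi0 : G phi0 = N%:R ^+ 2 by rewrite /G sin_phi0 subrr mulr0 sqmod_sum_expj0.
split.
  exists phi0; split; first exact: asin_in_pi.
  by move=> psi _; rewrite !fE G_phi0 ler_ratio ?cG_le.
move=> phi _ phi_max; apply: eq_steer; apply: (expj_eq1_of_sqmod_sum N_ge2).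
have := phi_max phi0 (asin_in_pi sin_in).
by rewrite !fE G_phi0 ler_ratio ?cG_le // ler_pM2l.
Qed.
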